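(* Let $n\ge1$ and let $(\eta,\xi)$ be an $n$-Lie-isoclinism from $\mathfrak g_1$ to $\mathfrak g_2$, and define $\mathcal K$, $Z_{\mathfrak g_1}$, $Z_{\mathfrak g_2}$ as in the context. Assume $[\mathcal Z_{n-1}^{\mathsf{Lie}}(\mathfrak g_i),\mathfrak g_i]_{\mathsf{Lie}}\subseteq\gamma_{n+1}^{\mathsf{Lie}}(\mathfrak g_i)$ for $i=1,2$. Then for $\{i,j\}=\{1,2\}$, $$\mathcal K/Z_{\mathfrak g_j}\ \sim_n\ \mathcal K/Z_{\mathfrak g_i}\oplus\mathcal K/\gamma_{n+1}^{\mathsf{Lie}}(\mathcal K).$$
   Context: All Leibniz algebras are over a field $\mathbb{K}$ with $\frac12\in\mathbb{K}$. A Leibniz algebra is a vector space $\mathfrak g$ with a bilinear bracket $[-,-]$ satisfying $[x,[y,z]]=[[x,y],z]-[[x,z],y]$. For $x,y\in\mathfrak g$ put $[x,y]_{lie}=[x,y]+[y,x]$. For two-sided ideals $\mathfrak m,\mathfrak n$ of $\mathfrak g$, $[\mathfrak m,\mathfrak n]_{\mathsf{Lie}}$ denotes the two-sided ideal of $\mathfrak g$ generated by $\{[m,x]_{lie}: m\in\mathfrak m, x\in\mathfrak n\}$. Lower Lie-central series: $\gamma_1^{\mathsf{Lie}}(\mathfrak g)=\mathfrak g$, $\gamma_i^{\mathsf{Lie}}(\mathfrak g)=[\gamma_{i-1}^{\mathsf{Lie}}(\mathfrak g),\mathfrak g]_{\mathsf{Lie}}$ for $i\ge2$. Upper Lie-central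 series: $\mathcal Z_0^{\mathsf{Lie}}(\mathfrak g)=0$, $\mathcal Z_i^{\mathsf{Lie}}(\mathfrak g)=\{x\in\mathfrak g:[x,y]_{lie}\in\mathcal Z_{i-1}^{\mathsf{Lie}}(\mathfrak g)\ \text{for all } y\in\mathfrak g\}$ for $i\ge1$. For $n\ge0$, Leibniz algebras $\mathfrak g_1,\mathfrak g_2$ are $n$-Lie-isoclinic, written $\mathfrak g_1\sim_n\mathfrak g_2$, if there exist Leibniz algebra isomorphisms $\eta:\mathfrak g_1/\mathcal Z_n^{\mathsf{Lie}}(\mathfrak g_1)\to\mathfrak g_2/\mathcal Z_n^{\mathsf{Lie}}(\mathfrak g_2)$ and $\xi:\gamma_{n+1}^{\mathsf{Lie}}(\mathfrak g_1)\to\gamma_{n+1}^{\mathsf{Lie}}(\mathfrak g_2)$ such that $\xi([\cdots[[x_1,x_2]_{lie},x_3]_{lie},\ldots,x_{n+1}]_{lie})=[\cdots[[y_1,y_2]_{lie},y_3]_{lie},\ldots,y_{n+1}]_{lie}$ whenever $x_i\in\mathfrak g_1$, $y_i\in\mathfrak g_2$ satisfy $\eta(x_i+\mathcal Z_n^{\mathsf{Lie}}(\mathfrak g_1))=y_i+\mathcal Z_n^{\mathsf{Lie}}(\mathfrak g_2)$ for $i=1,\ldots,n+1$; $(\eta,\xi)$ is then called an $n$-Lie-isoclinism from $\mathfrak g_1$ to $\mathfrak g_2$. Given such $(\eta,\xi)$: $\mathcal K=\{(g,h)\in\mathfrak g_1\oplus\mathfrak g_2:\eta(g+\mathcal Z_n^{\mathsf{Lie}}(\mathfrak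 g_1))=h+\mathcal Z_n^{\mathsf{Lie}}(\mathfrak g_2)\}$ (a subalgebra of $\mathfrak g_1\oplus\mathfrak g_2$), $Z_{\mathfrak g_1}=\{(g,0):g\in\mathcal Z_n^{\mathsf{Lie}}(\mathfrak g_1)\}$ and $Z_{\mathfrak g_2}=\{(0,h):h\in\mathcal Z_n^{\mathsf{Lie}}(\mathfrak g_2)\}$ (two-sided ideals of $\mathcal K$). *)

From HB Require Import structures.
From mathcomp Require Import all_boot all_order all_algebra.
Unset Implicit Arguments. Unset Strict Implicit. Unset Printing Implicit Defensive.
Import GRing.Theory.
Local Open Scope ring_scope.

(* Quotient algebras S/I (S a subalgebra of an
   ambient algebra, I a two-sided ideal of S) are represented by the pair of
   predicates (S, I) on the ambient space, all notions being computed on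
   representatives. *)

Section Leibniz.
Variable K : fieldType.

Definition leibniz (V : lmodType K) (br : V -> V -> V) : Prop :=
  [/\ (forall (a : K) x y z, br (a *: x + y) z = a *: br x z + br y z),
      (forall (a : K) x y z, br z (a *: x + y) = a *: br z x + br z y) &
      (forall x y z, br x (br y z) = br (br x y) z - br (br x z) y)].

Definition lie (V : lmodType K) (br : V -> V -> V) (x y : V) : V :=
  br x y + br y x.
Arguments lie {V}.

Record QAlg := {
  qV : lmodType K;
  qbr : qV -> qV -> qV;
  qS : qV -> Prop;
  qI : qV -> Prop
}.

Definition subspaceP (V : lmodType K) (J : V -> Prop) : Prop :=
  J 0 /\ forall (a : K) x y, J x -> J y -> J (a *: x + y).
Arguments subspaceP {V}.

(* Preimage in S of the two-sided ideal of S/I generated by the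
   [m, x]_lie, m in M, x in N  (i.e. [M, N]_Lie of the algebra S/I). *)
Definition lieIdeal (A : QAlg) (M N : qV A -> Prop) : qV A -> Prop :=
  fun v => forall J : qV A -> Prop,
    subspaceP J ->
    (forall x, qI A x -> J x) ->
    (forall m x, M m -> N x -> J (lie (qbr A) m x)) ->
    (forall s j, qS A s -> J j -> J (qbr A s j) /\ J (qbr A j s)) ->
    J v.


Fixpoint lowerLie_aux (A : QAlg) (k : nat) : qV A -> Prop :=
  match k with
  | 0 => qS A
  | k'.+1 => lieIdeal A (lowerLie_aux A k') (qS A)
  end.

(* gamma_k^Lie(S/I) (preimage in S), k >= 1 ; gamma_1 = S. *)
Definition lowerLie (A : QAlg) (k : nat) : qV A -> Prop := lowerLie_aux A k.-1.

(* Z_k^Lie(S/I) (preimage in S); Z_0 = I. *)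
Fixpoint upperLie (A : QAlg) (k : nat) : qV A -> Prop :=
  match k with
  | 0 => qI A
  | k'.+1 => fun x => qS A x /\ forall y, qS A y -> upperLie A k' (lie (qbr A) x y)
  end.

Fixpoint iterLie (V : lmodType K) (br : V -> V -> V) (x : nat -> V) (k : nat) : V :=
  match k with
  | 0 => x 0%N
  | k'.+1 => lie br (iterLie V br x k') (x k)
  end.
Arguments iterLie {V}.

(* f : V -> W represents (via representatives) a Leibniz algebra isomorphism
   SA/IA -> SB/IB. *)
Definition qiso (V W : lmodType K) (brV : V -> V -> V) (brW : W -> W -> W)
  (SA IA : V -> Prop) (SB IB : W -> Prop) (f : V -> W) : Prop :=
  (forall x, SA x -> SB (f x)) /\
  (forall x y, SA x -> SA y -> IA (x - y) -> IB (f x - f y)) /\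
  (forall (a : K) x y, SA x -> SA y -> IB (f (a *: x + y) - (a *: f x + f y))) /\
  (forall x y, SA x -> SA y -> IB (f (brV x y) - brW (f x) (f y))) /\
  (forall x y, SA x -> SA y -> IB (f x - f y) -> IA (x - y)) /\
  (forall y, SB y -> exists2 x, SA x & IB (f x - y)).
Arguments qiso {V W}.

Definition is_isoclinism (n : nat) (A B : QAlg) (eta xi : qV A -> qV B) : Prop :=
  [/\ qiso (qbr A) (qbr B) (qS A) (upperLie A n) (qS B) (upperLie B n) eta,
      qiso (qbr A) (qbr B) (lowerLie A n.+1) (qI A) (lowerLie B n.+1) (qI B) xi &
      (forall (x : nat -> qV A) (y : nat -> qV B),
         (forall i, (i <= n)%N -> qS A (x i)) ->
         (forall i, (i <= n)%N -> qS B (y i)) ->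
         (forall i, (i <= n)%N -> upperLie B n (eta (x i) - y i)) ->
         qI B (xi (iterLie (qbr A) x n) - iterLie (qbr B) y n))].

Definition isoclinic (n : nat) (A B : QAlg) : Prop :=
  exists eta xi, is_isoclinism n A B eta xi.

Definition wholeQ (V : lmodType K) (br : V -> V -> V) : QAlg :=
  {| qV := V; qbr := br; qS := fun _ => True; qI := fun x => x = 0 |}.
Arguments wholeQ {V}.

Definition prod_br (V W : lmodType K) (brV : V -> V -> V) (brW : W -> W -> W)
  (p q : (V * W)%type) : (V * W)%type := (brV p.1 q.1, brW p.2 q.2).
Arguments prod_br {V W}.

Section Kdefs.
Variables (V1 V2 : lmodType K) (br1 : V1 -> V1 -> V1) (br2 : V2 -> V2 -> V2).
Variables (n : nat) (eta : V1 -> V2).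

(* K = {(g,h) : eta(g + Z_n(g1)) = h + Z_n(g2)} *)
Definition Kpred : (V1 * V2)%type -> Prop :=
  fun p => upperLie (wholeQ br2) n (eta p.1 - p.2).

Definition Zg1 : (V1 * V2)%type -> Prop :=
  fun p => upperLie (wholeQ br1) n p.1 /\ p.2 = 0.

Definition Zg2 : (V1 * V2)%type -> Prop :=
  fun p => p.1 = 0 /\ upperLie (wholeQ br2) n p.2.

Definition KmodQ (I : (V1 * V2)%type -> Prop) : QAlg :=
  {| qV := (V1 * V2)%type; qbr := prod_br br1 br2; qS := Kpred; qI := I |}.

Definition gammaK : (V1 * V2)%type -> Prop :=
  lowerLie (KmodQ (fun p => p = 0)) n.+1.

Definition KsumQ (I : (V1 * V2)%type -> Prop) : QAlg :=
  {| qV := ((V1 * V2) * (V1 * V2))%type;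
     qbr := prod_br (prod_br br1 br2) (prod_br br1 br2);
     qS := fun pq => Kpred pq.1 /\ Kpred pq.2;
     qI := fun pq => I pq.1 /\ gammaK pq.2 |}.
End Kdefs.

End Leibniz.
Arguments leibniz {K V}.
Arguments lie {K V}.
Arguments subspaceP {K V}.
Arguments lieIdeal {K}.
Arguments lowerLie_aux {K}.
Arguments lowerLie {K}.
Arguments upperLie {K}.
Arguments iterLie {K V}.
Arguments qiso {K V W}.
Arguments is_isoclinism {K}.
Arguments isoclinic {K}.
Arguments wholeQ {K V}.
Arguments prod_br {K V W}.
Arguments Kpred {K V1 V2}.
Arguments Zg1 {K V1} V2.
Arguments Zg2 {K} V1 {V2}.
Arguments KmodQ {K V1 V2}.
Arguments gammaK {K V1 V2}.
Arguments KsumQ {K V1 V2}.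
Arguments qV {K}.
Arguments qbr {K}.
Arguments qS {K}.
Arguments qI {K}.

From HB Require Import structures.
From mathcomp Require Import all_boot all_order all_algebra.
From Stdlib Require Import ClassicalEpsilon.
Import GRing.Theory.
Local Open Scope ring_scope.
Set Implicit Arguments. Unset Strict Implicit. Unset Printing Implicit Defensive.

(* Write g1 = V1, g2 = V2 and K for the subalgebra of g1 (+) g2
   cut out by eta.  The first projection identifies K/Z_{g2} with g1 and the
   second identifies K/Z_{g1} with g2, while N := K/gamma_{n+1}^Lie(K) is
   n-Lie-nilpotent.  Hence the first projection of K/Z_{gj} (+) N onto gj is an
   "isoclinic projection": surjective, pulling back Z_n^Lie, mapping
   gamma_{n+1}^Lie onto gamma_{n+1}^Lie and injective there modulo the ideal.
   An isoclinism g_i ~n g_j transports along isoclinic projections onto g_i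
   and g_j, and n-Lie-isoclinism is symmetric; this gives both claims. *)

Section Subspaces.
Variables (K : fieldType) (V : lmodType K) (J : V -> Prop).
Hypothesis hJ : subspaceP J.

Lemma sub0 : J 0.
Proof. by case: hJ. Qed.

Lemma subL a x y : J x -> J y -> J (a *: x + y).
Proof. by case: hJ => _; apply. Qed.

Lemma subD x y : J x -> J y -> J (x + y).
Proof. by move=> Hx Hy; have := subL 1 Hx Hy; rewrite scale1r. Qed.

Lemma subN x : J x -> J (- x).
Proof. by move=> Hx; have := subL (-1) Hx sub0; rewrite addr0 scaleN1r. Qed.

Lemma subB x y : J x -> J y -> J (x - y).
Proof. by move=> Hx /subN; apply: subD. Qed.

Lemma subB_sym x y : J (x - y) -> J (y - x).
Proof. by move/subN; rewrite opprB. Qed.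

Lemma subB_trans x y z : J (x - y) -> J (y - z) -> J (x - z).
Proof. by move=> Hxy Hyz; have := subD Hxy Hyz; rewrite subrKA. Qed.

Lemma subL_cong a x x' y y' :
  J (x - x') -> J (y - y') -> J ((a *: x + y) - (a *: x' + y')).
Proof. by move=> Hx Hy; rewrite opprD addrACA -scalerBr; apply: subL. Qed.
End Subspaces.

Lemma true_sub (K : fieldType) (V : lmodType K) : subspaceP (fun _ : V => True).
Proof. by []. Qed.

Lemma zero_sub (K : fieldType) (V : lmodType K) : subspaceP (fun x : V => x = 0).
Proof. by split=> // a x y -> ->; rewrite scaler0 addr0. Qed.

Section LeibnizAlgebra.
Variables (K : fieldType) (V : lmodType K) (br : V -> V -> V).
Hypothesis hL : leibniz br.

Lemma brBl x y z : br (x - y) z = br x z - br y z.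
Proof. by case: hL => hl _ _; rewrite -scaleN1r addrC hl scaleN1r addrC. Qed.

Lemma brBr x y z : br z (x - y) = br z x - br z y.
Proof. by case: hL => _ hr _; rewrite -scaleN1r addrC hr scaleN1r addrC. Qed.

Lemma brDl x y z : br (x + y) z = br x z + br y z.
Proof. by case: hL => hl _ _; have := hl 1 x y z; rewrite !scale1r. Qed.

Lemma br0l z : br 0 z = 0.
Proof. by have := brBl 0 0 z; rewrite !subrr. Qed.

Lemma br0r z : br z 0 = 0.
Proof. by have := brBr 0 0 z; rewrite !subrr. Qed.

Lemma lieLl a x y z : lie br (a *: x + y) z = a *: lie br x z + lie br y z.
Proof. by case: hL => hl hr _; rewrite /lie hl hr scalerDr addrACA. Qed.

Lemma lie0l z : lie br 0 z = 0.
Proof. by rewrite /lie br0l br0r addr0. Qed.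

Lemma br_cong (J : V -> Prop) : subspaceP J ->
  (forall u w, J u -> J (br u w) /\ J (br w u)) ->
  forall u u' v v', J (u - u') -> J (v - v') -> J (br u v - br u' v').
Proof.
move=> hJ hI u u' v v' Hu Hv.
have -> : br u v - br u' v' = br (u - u') v + br u' (v - v').
  by rewrite brBl brBr subrKA.
by apply: subD => //; [exact: (hI _ _ Hu).1 | exact: (hI _ _ Hv).2].
Qed.

Lemma zero_ideal u w : u = 0 -> br u w = 0 /\ br w u = 0.
Proof. by move=> ->; rewrite br0l br0r. Qed.

Local Notation Z k := (upperLie (wholeQ br) k).

Lemma Z0 k : Z k 0.
Proof. by elim: k => [//|k IH] /=; split => // y _; rewrite lie0l. Qed.

Lemma Zsub k : subspaceP (Z k).
Proof.
elim: k => [|k IH] /=; first exact: zero_sub.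
split; first exact: (Z0 k.+1).
move=> a x y [_ Hx] [_ Hy]; split => // z _.
by rewrite lieLl; apply: subL => //; [exact: Hx | exact: Hy].
Qed.

Lemma Zmono k x : Z k x -> Z k.+1 x.
Proof.
elim: k x => [|k IH] x /=; first by move=> ->; split => // y _; rewrite lie0l.
by case=> _ H; split => // y _; apply: IH; apply: H.
Qed.

Lemma lie_br_id x y z :
  lie br (br x z) y = br (lie br x y) z - lie br x (br y z).
Proof.
case: hL => _ _ L3.
have e4 : br (br x z) y = br (br x y) z - br x (br y z).
  by rewrite (L3 x y z) opprB addrC subrK.
rewrite /lie brDl e4 (L3 y x z) opprD !addrA; congr (_ - _).
by rewrite addrC addrA [br (br y x) z + _]addrC.
Qed.

Lemma Zideal k x z : Z k x -> Z k (br x z) /\ Z k (br z x).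
Proof.
elim: k x z => [|k IH] x z /=; first by move=> ->; rewrite br0l br0r.
case=> _ H.
have H1 : Z k.+1 (br x z).
  split => // y _; rewrite lie_br_id.
  apply: subB; [exact: Zsub | by have [] := IH _ z (H y I) | exact: H].
split => //.
have -> : br z x = lie br x z - br x z by rewrite /lie addrC addKr.
by apply: (subB (Zsub k.+1)) => //; apply: Zmono; apply: H.
Qed.

End LeibnizAlgebra.

(* Presented algebras S/I.  [wf_pres A] says that S is a subalgebra containing
   I; this is all that is needed for the lower Lie-central series of S/I to be
   a decreasing chain of subspaces of S, closed under the bracket. *)
Record wf_pres (K : fieldType) (A : QAlg K) : Prop := WfPres {
  wf_sub : subspaceP (qS A);
  wf_br : forall x y, qS A x -> qS A y -> qS A (qbr A x y);
  wf_I : forall x, qI A x -> qS A x }.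

Lemma wf_whole (K : fieldType) (V : lmodType K) (br : V -> V -> V) :
  wf_pres (wholeQ br).
Proof. by split=> //; split. Qed.

Section LieIdeal.
Variables (K : fieldType) (A : QAlg K) (M N : qV A -> Prop).

Lemma LI_sub : subspaceP (lieIdeal A M N).
Proof.
split; first by move=> J HJ _ _ _; exact: sub0 HJ.
by move=> a x y Hx Hy J HJ H1 H2 H3; apply: subL => //; [exact: Hx | exact: Hy].
Qed.

Lemma LI_I x : qI A x -> lieIdeal A M N x.
Proof. by move=> Hx J _ H1 _ _; apply: H1. Qed.

Lemma LI_gen m x : M m -> N x -> lieIdeal A M N (lie (qbr A) m x).
Proof. by move=> Hm Hx J _ _ H2 _; apply: H2. Qed.

Lemma LI_ideal s j : qS A s -> lieIdeal A M N j ->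
  lieIdeal A M N (qbr A s j) /\ lieIdeal A M N (qbr A j s).
Proof.
move=> Hs Hj; split=> J HJ H1 H2 H3; have := H3 s j Hs (Hj J HJ H1 H2 H3); by case.
Qed.
End LieIdeal.

Lemma lower_iter (K : fieldType) (A : QAlg K) k (x : nat -> qV A) :
  (forall i, (i <= k)%N -> qS A (x i)) -> lowerLie_aux A k (iterLie (qbr A) x k).
Proof.
elim: k => [|k IH] Hx /=; first exact: Hx.
by apply: LI_gen; [apply: IH => i Hi; apply: Hx; apply: leqW | exact: Hx].
Qed.

Lemma lower_succ_sub (K : fieldType) (A : QAlg K) k : subspaceP (lowerLie_aux A k.+1).
Proof. exact: LI_sub. Qed.

Section LowerSeries.
Variables (K : fieldType) (A : QAlg K).
Hypothesis wfA : wf_pres A.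

Lemma lie_S x y : qS A x -> qS A y -> qS A (lie (qbr A) x y).
Proof. by move=> Hx Hy; apply: (subD (wf_sub wfA)); apply: (wf_br wfA). Qed.

Lemma lower_S k x : lowerLie_aux A k x -> qS A x.
Proof.
elim: k x => [//|k IH] x /= Hx; apply: Hx.
- exact: wf_sub wfA.
- exact: wf_I wfA.
- by move=> m y Hm Hy; apply: lie_S => //; apply: IH.
- by move=> s j Hs Hj; split; apply: (wf_br wfA).
Qed.

Lemma lower_sub k : subspaceP (lowerLie_aux A k).
Proof. by case: k => [|k]; [exact: wf_sub wfA | exact: LI_sub]. Qed.

Lemma lower_br k x y :
  lowerLie_aux A k x -> lowerLie_aux A k y -> lowerLie_aux A k (qbr A x y).
Proof.
case: k => [|k] Hx Hy; first exact: (wf_br wfA).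
exact: (LI_ideal (lower_S Hx) Hy).1.
Qed.

Lemma lower_mono k x : lowerLie_aux A k.+1 x -> lowerLie_aux A k x.
Proof.
elim: k x => [|k IH] x; first exact: lower_S.
move=> /= Hx; apply: Hx.
- exact: LI_sub.
- exact: LI_I.
- by move=> m y Hm Hy; apply: LI_gen => //; apply: IH.
- by move=> s j Hs Hj; apply: LI_ideal.
Qed.

Lemma lower_mono_le k m x : (k <= m)%N -> lowerLie_aux A m x -> lowerLie_aux A k x.
Proof.
move=> /subnKC <-; elim: (m - k)%N x => [|d IH] x; first by rewrite addn0.
by rewrite addnS => /lower_mono /IH.
Qed.

Lemma upper_S k x : upperLie A k x -> qS A x.
Proof. by case: k => [/(wf_I wfA) | k []]. Qed.
End LowerSeries.

Record pres_morph (K : fieldType) (A : QAlg K) (W : lmodType K)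
    (brW : W -> W -> W) (f : qV A -> W) : Prop := PresMorph {
  morph_lin : forall a x y, qS A x -> qS A y -> f (a *: x + y) = a *: f x + f y;
  morph_br : forall x y, qS A x -> qS A y -> f (qbr A x y) = brW (f x) (f y) }.
Arguments pres_morph {K} A {W} brW f.

Section Morphisms.
Variables (K : fieldType) (A : QAlg K) (W : lmodType K) (brW : W -> W -> W).
Variable f : qV A -> W.
Hypotheses (wfA : wf_pres A) (hf : pres_morph A brW f).

Lemma morph0 : f 0 = 0.
Proof.
have S0 := sub0 (wf_sub wfA).
by have := morph_lin hf (-1) S0 S0; rewrite !scaleN1r !addNr.
Qed.

Lemma morphB x y : qS A x -> qS A y -> f (x - y) = f x - f y.
Proof.
move=> Hx Hy; have := morph_lin hf (-1) Hy Hx.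
by rewrite !scaleN1r addrC => ->; rewrite addrC.
Qed.

Lemma morph_lie x y : qS A x -> qS A y -> f (lie (qbr A) x y) = lie brW (f x) (f y).
Proof.
move=> Hx Hy; have := morph_lin hf 1 (wf_br wfA Hx Hy) (wf_br wfA Hy Hx).
by rewrite !scale1r /lie !(morph_br hf).
Qed.

Lemma morph_iter k (x : nat -> qV A) : (forall i, (i <= k)%N -> qS A (x i)) ->
  f (iterLie (qbr A) x k) = iterLie brW (fun i => f (x i)) k.
Proof.
elim: k => [//|k IH] Hx /=.
have Hx' i : (i <= k)%N -> qS A (x i) by move=> Hi; apply: Hx; apply: leqW.
rewrite morph_lie ?IH //; last exact: Hx.
exact: (lower_S wfA (lower_iter Hx')).
Qed.
End Morphisms.

Record pres_iso (K : fieldType) (A : QAlg K) (W : lmodType K)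
    (brW : W -> W -> W) (f : qV A -> W) : Prop := PresIso {
  iso_morph : pres_morph A brW f;
  iso_surj : forall w, exists2 x, qS A x & f x = w;
  iso_ker : forall x, qS A x -> (qI A x <-> f x = 0) }.
Arguments pres_iso {K} A {W} brW f.

Record isoclinic_proj (K : fieldType) (n : nat) (A : QAlg K) (W : lmodType K)
    (brW : W -> W -> W) (f : qV A -> W) : Prop := IsoclinicProj {
  ip_morph : pres_morph A brW f;
  ip_surj : forall w, exists2 x, qS A x & f x = w;
  ip_Z : forall x, upperLie A n x <-> qS A x /\ upperLie (wholeQ brW) n (f x);
  ip_G : forall x, lowerLie A n.+1 x -> lowerLie (wholeQ brW) n.+1 (f x);
  ip_Gsurj : forall w, lowerLie (wholeQ brW) n.+1 w ->
    exists2 x, lowerLie A n.+1 x & f x = w;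
  ip_I : forall x, lowerLie A n.+1 x -> (qI A x <-> f x = 0) }.
Arguments isoclinic_proj {K} n A {W} brW f.

Section PresIso.
Variables (K : fieldType) (A : QAlg K) (W : lmodType K) (brW : W -> W -> W).
Variable f : qV A -> W.
Hypotheses (wfA : wf_pres A) (hf : pres_iso A brW f).
Let hm := iso_morph hf.

Lemma hom_upper k x : upperLie A k x <-> qS A x /\ upperLie (wholeQ brW) k (f x).
Proof.
elim: k x => [|k IH] x /=.
  split=> [Ix | [Sx fx0]]; last exact/(iso_ker hf Sx).
  by have Sx := wf_I wfA Ix; split => //; apply/(iso_ker hf Sx).
split=> [[Sx H] | [Sx [_ H]]]; split=> //.
- split=> // w _; have [y Sy <-] := iso_surj hf w.
  by rewrite -(morph_lie wfA hm) //; apply: (proj1 (IH _) (H y Sy)).2.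
- by move=> y Sy; apply/IH; split; [exact: lie_S | rewrite (morph_lie wfA hm) //; apply: H].
Qed.

(* An element of S with the same image as an element of gamma_{k+1}^Lie lies
   in gamma_{k+1}^Lie: the two differ by an element of I. *)
Lemma lower_fibre k x u : qS A x -> qS A u -> f x = f u ->
  lowerLie_aux A k.+1 u -> lowerLie_aux A k.+1 x.
Proof.
move=> Sx Su E Hu; rewrite -(subrK u x); apply: (subD (lower_sub wfA k.+1)) => //.
by apply: LI_I; apply/(iso_ker hf (subB (wf_sub wfA) Sx Su)); rewrite (morphB hm) // E subrr.
Qed.

Lemma hom_lower_img k x : lowerLie_aux A k x -> lowerLie_aux (wholeQ brW) k (f x).
Proof.
elim: k x => [//|k IH] x Hx.
suff [] : qS A x /\ lowerLie_aux (wholeQ brW) k.+1 (f x) by [].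
apply: (Hx (fun x => qS A x /\ lowerLie_aux (wholeQ brW) k.+1 (f x))).
- have GW := lower_sub (wf_whole brW) k.+1.
  split; first by rewrite (morph0 wfA hm); split; [exact: sub0 (wf_sub wfA) | exact: sub0 GW].
  move=> a y z [Sy Hy] [Sz Hz]; split; first exact: (subL (wf_sub wfA) _ Sy Sz).
  by rewrite (morph_lin hm) //; exact: (subL GW _ Hy Hz).
- move=> y Iy; have Sy := wf_I wfA Iy; split=> //.
  by rewrite (proj1 (iso_ker hf Sy) Iy); exact: (sub0 (lower_sub (wf_whole brW) k.+1)).
- move=> m y Hm Sy; have Sm := lower_S wfA Hm; split; first exact: lie_S.
  by rewrite (morph_lie wfA hm) //; apply: LI_gen => //; exact: IH.
- move=> s j Ss [Sj Hj]; have [H1 H2] := LI_ideal (A := wholeQ brW) (s := f s) I Hj.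
  by split; (split; first exact: (wf_br wfA)); rewrite (morph_br hm).
Qed.

Lemma hom_lower_pre k x : qS A x ->
  lowerLie_aux (wholeQ brW) k (f x) -> lowerLie_aux A k x.
Proof.
elim: k x => [//|k IH] x Sx Hfx.
pose P w := forall y, qS A y -> f y = w -> lowerLie_aux A k.+1 y.
suff : P (f x) by apply.
have inI y : qS A y -> f y = 0 -> lowerLie_aux A k.+1 y.
  by move=> Sy fy0; apply: LI_I; apply/(iso_ker hf Sy).
apply: Hfx.
- split=> [|a w1 w2 H1 H2 y Sy Ey]; first exact: inI.
  have [y1 S1 E1] := iso_surj hf w1; have [y2 S2 E2] := iso_surj hf w2.
  apply: (lower_fibre (u := a *: y1 + y2)) => //; first exact: (subL (wf_sub wfA) _ S1 S2).
    by rewrite (morph_lin hm) // E1 E2.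
  exact: (subL (lower_sub wfA k.+1) _ (H1 _ S1 E1) (H2 _ S2 E2)).
- by move=> w /= ->; exact: inI.
- move=> m w Hm _ y Sy Ey.
  have [m' Sm Em] := iso_surj hf m; have [w' Sw Ew] := iso_surj hf w.
  apply: (lower_fibre (u := lie (qbr A) m' w')) => //; first exact: lie_S.
    by rewrite (morph_lie wfA hm) // Em Ew.
  by apply: LI_gen => //; apply: IH => //; rewrite Em.
- move=> s j _ Hj; have [s' Ss Es] := iso_surj hf s; have [j' Sj Ej] := iso_surj hf j.
  have [L1 L2] := LI_ideal Ss (Hj j' Sj Ej).
  split=> y Sy Ey.
  + apply: (lower_fibre (u := qbr A s' j')) => //; first exact: (wf_br wfA).
    by rewrite (morph_br hm) // Es Ej.
  + apply: (lower_fibre (u := qbr A j' s')) => //; first exact: (wf_br wfA).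
    by rewrite (morph_br hm) // Es Ej.
Qed.

Lemma isoclinic_proj_of_iso n : isoclinic_proj n A brW f.
Proof.
split; [exact: hm | exact: iso_surj hf | exact: hom_upper | exact: hom_lower_img | |].
- move=> w Gw; have [x Sx Ex] := iso_surj hf w.
  by exists x => //; apply: hom_lower_pre => //; rewrite Ex.
- by move=> x Gx; exact: (iso_ker hf (lower_S wfA Gx)).
Qed.
End PresIso.

Section IsoclinicProj.
Variables (K : fieldType) (n : nat) (A : QAlg K) (W : lmodType K).
Variables (brW : W -> W -> W) (f : qV A -> W).
Hypotheses (wfA : wf_pres A) (hf : isoclinic_proj n A brW f).

Lemma ip_Zdiff u v : qS A u -> qS A v ->
  (upperLie A n (u - v) <-> upperLie (wholeQ brW) n (f u - f v)).
Proof.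
move=> Su Sv; rewrite (ip_Z hf) (morphB (ip_morph hf)) //.
by split=> [[] | H] //; split=> //; exact: (subB (wf_sub wfA)).
Qed.

Lemma ip_Idiff u v : lowerLie A n.+1 u -> lowerLie A n.+1 v ->
  (qI A (u - v) <-> f u = f v).
Proof.
move=> Gu Gv; have Guv := subB (lower_sub wfA n) Gu Gv.
rewrite (ip_I hf Guv) (morphB (ip_morph hf) (lower_S wfA Gu) (lower_S wfA Gv)).
by split=> [/subr0_eq | ->] //; rewrite subrr.
Qed.
End IsoclinicProj.

Definition prodQ (K : fieldType) (A1 A2 : QAlg K) : QAlg K :=
  {| qV := (qV A1 * qV A2)%type; qbr := prod_br (qbr A1) (qbr A2);
     qS := fun p => qS A1 p.1 /\ qS A2 p.2;
     qI := fun p => qI A1 p.1 /\ qI A2 p.2 |}.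

Lemma pair_comb_inl (K : fieldType) (V W : lmodType K) a (y z : V) :
  a *: ((y, 0) : (V * W)%type) + (z, 0) = (a *: y + z, 0).
Proof. by apply: (@f_equal2 _ _ _ pair _ _ (a *: 0 + 0) 0) => //; rewrite scaler0 addr0. Qed.

Section Products.
Variables (K : fieldType) (A1 A2 : QAlg K).

Lemma prod_br_pair x1 x2 y1 y2 :
  qbr (prodQ A1 A2) (x1, x2) (y1, y2) = (qbr A1 x1 y1, qbr A2 x2 y2).
Proof. by []. Qed.

Lemma prod_lie x1 x2 y1 y2 :
  lie (qbr (prodQ A1 A2)) (x1, x2) (y1, y2) = (lie (qbr A1) x1 y1, lie (qbr A2) x2 y2).
Proof. by []. Qed.

Lemma wf_prod : wf_pres A1 -> wf_pres A2 -> wf_pres (prodQ A1 A2).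
Proof.
case=> [[S10 S1L] S1br S1I] [[S20 S2L] S2br S2I]; split.
- split=> [|a x y [Hx1 Hx2] [Hy1 Hy2]]; first by split; [exact: S10 | exact: S20].
  by split; [exact: S1L | exact: S2L].
- by move=> x y [Hx1 Hx2] [Hy1 Hy2]; split; [exact: S1br | exact: S2br].
- by move=> x [Hx1 Hx2]; split; [exact: S1I | exact: S2I].
Qed.

Lemma prod_upper k p : qS A1 0 -> qS A2 0 ->
  upperLie (prodQ A1 A2) k p <-> upperLie A1 k p.1 /\ upperLie A2 k p.2.
Proof.
move=> S10 S20; elim: k p => [//|k IH] p.
split=> [[[S1 S2] H] | [[S1 H1] [S2 H2]]].
- split; split=> // y Sy.
  + by have [] := proj1 (IH _) (H (y, 0) (conj Sy S20)).
  + by have [] := proj1 (IH _) (H (0, y) (conj S10 Sy)).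
- by split=> // y [Sy1 Sy2]; apply/IH; split; [exact: H1 | exact: H2].
Qed.

Lemma prod_lower_proj k p : lowerLie_aux (prodQ A1 A2) k p ->
  lowerLie_aux A1 k p.1 /\ lowerLie_aux A2 k p.2.
Proof.
elim: k p => [|k IH] p Hp; first exact: Hp.
apply: (Hp (fun p => lowerLie_aux A1 k.+1 p.1 /\ lowerLie_aux A2 k.+1 p.2)).
- split=> [|a x y [Hx1 Hx2] [Hy1 Hy2]].
    by split; exact: (sub0 (lower_succ_sub _ _)).
  by split; exact: (subL (lower_succ_sub _ _)).
- by move=> x [H1 H2]; split; apply: LI_I.
- by move=> m x /IH [Hm1 Hm2] [Hx1 Hx2]; split; apply: LI_gen.
- move=> s j [Hs1 Hs2] [Hj1 Hj2].
  have [a1 b1] := LI_ideal Hs1 Hj1; have [a2 b2] := LI_ideal Hs2 Hj2.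
  by split; split.
Qed.

Lemma prod_lower_inl k x : qS A2 0 -> qI A2 0 -> qbr A2 0 0 = 0 ->
  lowerLie_aux A1 k x -> lowerLie_aux (prodQ A1 A2) k (x, 0).
Proof.
move=> S20 I20 br20; elim: k x => [|k IH] x Hx; first by split.
apply: (Hx (fun x => lowerLie_aux (prodQ A1 A2) k.+1 (x, 0))).
- split=> [|a y z Hy Hz]; first exact: (sub0 (lower_succ_sub _ _)).
  by rewrite -pair_comb_inl; exact: (subL (lower_succ_sub _ _) a Hy Hz).
- by move=> y Iy; apply: LI_I.
- move=> m y Hm Sy.
  have := @LI_gen _ (prodQ A1 A2) _ (qS (prodQ A1 A2)) (m, 0) (y, 0) (IH m Hm) (conj Sy S20).
  by rewrite prod_lie {2}/lie br20 addr0.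
- move=> s j Ss Hj; have [] := LI_ideal (conj Ss S20 : qS (prodQ A1 A2) (s, 0)) Hj.
  by rewrite !prod_br_pair br20.
Qed.
End Products.

Record lie_nilpotent (K : fieldType) (n : nat) (N : QAlg K) : Prop := LieNilpotent {
  nil_upper : forall x, qS N x -> upperLie N n x;
  nil_lower : forall x, lowerLie N n.+1 x -> qI N x }.
Arguments lie_nilpotent {K} n N.

Lemma isoclinic_proj_prod (K : fieldType) (n : nat) (A N : QAlg K)
    (W : lmodType K) (brW : W -> W -> W) (f : qV A -> W) :
  wf_pres A -> wf_pres N -> qI N 0 -> qbr N 0 0 = 0 ->
  isoclinic_proj n A brW f -> lie_nilpotent n N ->
  isoclinic_proj n (prodQ A N) brW (fun q => f q.1).
Proof.
move=> wfA wfN IN0 brN0 hf hN.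
have [SA0 SN0] := (sub0 (wf_sub wfA), sub0 (wf_sub wfN)).
split.
- split=> [a x y [Sx _] [Sy _] | x y [Sx _] [Sy _]].
    exact: (morph_lin (ip_morph hf)).
  exact: (morph_br (ip_morph hf)).
- by move=> w; have [x Sx <-] := ip_surj hf w; exists (x, 0).
- move=> q; rewrite prod_upper // (ip_Z hf).
  split=> [[[S1 Z1] /(upper_S wfN) S2] | [[S1 S2] Z1]] //.
  by split; [split | exact: nil_upper].
- by move=> q /prod_lower_proj [G1 _]; exact: ip_G.
- move=> w Gw; have [x Gx <-] := ip_Gsurj hf Gw.
  by exists (x, 0) => //; apply: prod_lower_inl.
- move=> q /prod_lower_proj [G1 G2] /=.
  split=> [[I1 _] | E]; first exact: (proj1 (ip_I hf G1) I1).
  by split; [exact: (proj2 (ip_I hf G1) E) | exact: (nil_lower hN G2)].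
Qed.

Definition lower_quot (K : fieldType) (n : nat) (A : QAlg K) : QAlg K :=
  {| qV := qV A; qbr := qbr A; qS := qS A; qI := lowerLie A n.+1 |}.

Section LowerQuotient.
Variables (K : fieldType) (n : nat) (A : QAlg K).
Hypothesis wfA : wf_pres A.
Local Notation Q := (lower_quot n A).

Lemma wf_lower_quot : wf_pres Q.
Proof. by split=> [||x /(lower_S wfA) //]; [exact: wf_sub wfA | exact: wf_br wfA]. Qed.

Lemma lower_quot_upper j m x : (j + m)%N = n -> lowerLie_aux A m x -> upperLie Q j x.
Proof.
elim: j m x => [|j IH] m x E Hx /=; first by rewrite add0n in E; rewrite -E.
split; first exact: (lower_S wfA Hx).
by move=> y Sy; apply: (IH m.+1); [rewrite addnS | exact: LI_gen].
Qed.

Lemma lower_quot_lower k x : (k <= n)%N -> lowerLie_aux Q k x -> lowerLie_aux A k x.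
Proof.
elim: k x => [//|k IH] x Hk /= Hx; apply: Hx.
- exact: LI_sub.
- by move=> y /(lower_mono_le wfA Hk).
- by move=> m y Hm Hy; apply: LI_gen => //; apply: IH => //; exact: ltnW.
- by move=> s j Hs Hj; apply: LI_ideal.
Qed.

Lemma lower_quot_nilpotent : lie_nilpotent n Q.
Proof.
split=> x Hx; first exact: (lower_quot_upper (addn0 n)).
exact: (lower_quot_lower (leqnn n)).
Qed.
End LowerQuotient.

Section QisoInverse.
Variables (K : fieldType) (V W : lmodType K) (brV : V -> V -> V) (brW : W -> W -> W).
Variables (SA IA : V -> Prop) (SB IB : W -> Prop) (f : V -> W).
Hypotheses (hSA : subspaceP SA) (hSB : subspaceP SB).
Hypothesis hIB : subspaceP IB.
Hypothesis brSA : forall x y, SA x -> SA y -> SA (brV x y).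
Hypothesis brSB : forall x y, SB x -> SB y -> SB (brW x y).
Hypotheses (hLW : leibniz brW) (idIB : forall u w, IB u -> IB (brW u w) /\ IB (brW w u)).
Hypothesis hf : qiso brV brW SA IA SB IB f.

Definition qinv (y : W) : V := epsilon (inhabits 0) (fun x => SA x /\ IB (f x - y)).

Lemma qinv_spec y : SB y -> SA (qinv y) /\ IB (f (qinv y) - y).
Proof.
move=> Sy; apply: (epsilon_spec (inhabits 0) (fun x => SA x /\ IB (f x - y))).
by have [_ [_ [_ [_ [_ fsurj]]]]] := hf; have [x Sx Ix] := fsurj y Sy; exists x.
Qed.

Lemma qiso_inv : qiso brW brV SB IB SA IA qinv.
Proof.
have [fS [fwd [flin [fbr [finj fsurj]]]]] := hf.
have gS y (Sy : SB y) := (qinv_spec Sy).1.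
have gI y (Sy : SB y) := (qinv_spec Sy).2.
have Ig y (Sy : SB y) := subB_sym hIB (gI y Sy).
(* Each property of qinv follows from injectivity of f modulo IB, after
   computing f o qinv modulo IB. *)
split; [exact: gS | split; [|split; [|split; [|split]]]].
- move=> y y' Sy Sy' Iyy'; apply: (finj _ _ (gS _ Sy) (gS _ Sy')).
  exact: (subB_trans hIB (gI _ Sy) (subB_trans hIB Iyy' (Ig _ Sy'))).
- move=> a y y' Sy Sy'; have Sl := subL hSB a Sy Sy'.
  apply: (finj _ _ (gS _ Sl) (subL hSA a (gS _ Sy) (gS _ Sy'))).
  apply: (subB_trans hIB (gI _ Sl)).
  apply: (subB_trans hIB (subL_cong hIB a (Ig _ Sy) (Ig _ Sy'))).
  exact: (subB_sym hIB (flin a _ _ (gS _ Sy) (gS _ Sy'))).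
- move=> y y' Sy Sy'; have Sb := brSB Sy Sy'.
  apply: (finj _ _ (gS _ Sb) (brSA (gS _ Sy) (gS _ Sy'))).
  apply: (subB_trans hIB (gI _ Sb)).
  apply: (subB_trans hIB (br_cong hLW hIB idIB (Ig _ Sy) (Ig _ Sy'))).
  exact: (subB_sym hIB (fbr _ _ (gS _ Sy) (gS _ Sy'))).
- move=> y y' Sy Sy' Ig'; apply: (subB_trans hIB (Ig _ Sy)).
  exact: (subB_trans hIB (fwd _ _ (gS _ Sy) (gS _ Sy') Ig') (gI _ Sy')).
- move=> x Sx; exists (f x); first exact: fS.
  exact: (finj _ _ (gS _ (fS _ Sx)) Sx (gI _ (fS _ Sx))).
Qed.
End QisoInverse.

Section WholeIsoclinism.
Variables (K : fieldType) (V1 V2 : lmodType K).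
Variables (br1 : V1 -> V1 -> V1) (br2 : V2 -> V2 -> V2) (n : nat).
Local Notation Z1 := (upperLie (wholeQ br1) n).
Local Notation Z2 := (upperLie (wholeQ br2) n).
Local Notation G1 := (lowerLie (wholeQ br1) n.+1).
Local Notation G2 := (lowerLie (wholeQ br2) n.+1).

Section EtaFacts.
Variable eta : V1 -> V2.
Hypothesis heta : qiso br1 br2 (fun _ => True) Z1 (fun _ => True) Z2 eta.

Lemma eta_wd x y : Z1 (x - y) -> Z2 (eta x - eta y).
Proof. by case: heta => [_ [wd _]]; apply: wd. Qed.

Lemma eta_lin a x y : Z2 (eta (a *: x + y) - (a *: eta x + eta y)).
Proof. by case: heta => [_ [_ [lin _]]]; apply: lin. Qed.

Lemma eta_br x y : Z2 (eta (br1 x y) - br2 (eta x) (eta y)).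
Proof. by case: heta => [_ [_ [_ [br _]]]]; apply: br. Qed.

Lemma eta_inj x y : Z2 (eta x - eta y) -> Z1 (x - y).
Proof. by case: heta => [_ [_ [_ [_ [inj _]]]]]; apply: inj. Qed.

Lemma eta_surj y : exists x, Z2 (eta x - y).
Proof. by case: heta => [_ [_ [_ [_ [_ surj]]]]]; have [x _ Hx] := surj y I; exists x. Qed.
End EtaFacts.

Section XiFacts.
Variable xi : V1 -> V2.
Hypothesis hxi : qiso br1 br2 G1 (fun x => x = 0) G2 (fun x => x = 0) xi.

Lemma xi_in x : G1 x -> G2 (xi x).
Proof. by case: hxi => [h _]; apply: h. Qed.

Lemma xi_lin a x y : G1 x -> G1 y -> xi (a *: x + y) = a *: xi x + xi y.
Proof. by case: hxi => [_ [_ [h _]]] Gx Gy; apply/subr0_eq/h. Qed.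

Lemma xi_br x y : G1 x -> G1 y -> xi (br1 x y) = br2 (xi x) (xi y).
Proof. by case: hxi => [_ [_ [_ [h _]]]] Gx Gy; apply/subr0_eq/h. Qed.

Lemma xi_inj x y : G1 x -> G1 y -> xi x = xi y -> x = y.
Proof. by case: hxi => [_ [_ [_ [_ [h _]]]]] Gx Gy E; apply/subr0_eq/h; rewrite ?E ?subrr. Qed.

Lemma xi_surj y : G2 y -> exists2 x, G1 x & xi x = y.
Proof. by case: hxi => [_ [_ [_ [_ [_ h]]]]] /h [x Gx /subr0_eq]; exists x. Qed.
End XiFacts.

Section Isoclinism.
Variables (eta xi : V1 -> V2).
Hypothesis hiso : is_isoclinism n (wholeQ br1) (wholeQ br2) eta xi.

Lemma isoclinism_eta : qiso br1 br2 (fun _ => True) Z1 (fun _ => True) Z2 eta.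
Proof. by case: hiso. Qed.

Lemma isoclinism_xi : qiso br1 br2 G1 (fun x => x = 0) G2 (fun x => x = 0) xi.
Proof. by case: hiso. Qed.

Lemma isoclinism_compat (x : nat -> V1) (y : nat -> V2) :
  (forall i, (i <= n)%N -> Z2 (eta (x i) - y i)) -> xi (iterLie br1 x n) = iterLie br2 y n.
Proof. by case: hiso => _ _ h Hxy; apply/subr0_eq/h. Qed.

Lemma isoclinism_sym : leibniz br1 -> leibniz br2 -> isoclinic n (wholeQ br2) (wholeQ br1).
Proof.
move=> hL1 hL2; have heta := isoclinism_eta; have hxi := isoclinism_xi.
have [Z1s Z2s] := (Zsub hL1 n, Zsub hL2 n).
have [wf1 wf2] := (wf_whole br1, wf_whole br2).
exists (qinv (fun _ => True) Z2 eta), (qinv G1 (fun x => x = 0) xi); split.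
- exact: (qiso_inv (true_sub _) (true_sub _) Z2s (fun _ _ _ _ => I) (fun _ _ _ _ => I)
    hL2 (Zideal hL2 (k := n)) heta).
- exact: (qiso_inv (lower_sub wf1 n) (lower_sub wf2 n) (zero_sub _)
    (lower_br wf1 (k := n)) (lower_br wf2 (k := n)) hL2 (zero_ideal hL2) hxi).
- (* eta y_i = x_i modulo Z_n, so xi maps [y_0, ..., y_n] to [x_0, ..., x_n],
     which identifies the inverse of xi on the latter. *)
  move=> x y _ _ Hxy.
  have Ey : xi (iterLie br1 y n) = iterLie br2 x n.
    apply: isoclinism_compat => i Hi.
    apply: (subB_trans Z2s (eta_wd heta (subB_sym Z1s (Hxy i Hi)))).
    exact: (qinv_spec heta (I : True)).2.
  have Gx : G2 (iterLie br2 x n) by exact: (lower_iter (A := wholeQ br2)).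
  have Gy : G1 (iterLie br1 y n) by exact: (lower_iter (A := wholeQ br1)).
  have [Gg /subr0_eq Eg] := qinv_spec hxi Gx.
  by rewrite (xi_inj hxi Gg Gy) ?subrr // Ey.
Qed.
End Isoclinism.
End WholeIsoclinism.

(* The new maps send a to a representative b with
   pB b = eta (pA a) modulo Z_n^Lie, resp. xi (pA a) exactly. *)
Section Transport.
Variables (K : fieldType) (V1 V2 : lmodType K).
Variables (br1 : V1 -> V1 -> V1) (br2 : V2 -> V2 -> V2) (n : nat) (eta xi : V1 -> V2).
Hypothesis hL2 : leibniz br2.
Hypothesis hiso : is_isoclinism n (wholeQ br1) (wholeQ br2) eta xi.
Variables (A B : QAlg K) (pA : qV A -> V1) (pB : qV B -> V2).
Hypotheses (wfA : wf_pres A) (wfB : wf_pres B).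
Hypotheses (hA : isoclinic_proj n A br1 pA) (hB : isoclinic_proj n B br2 pB).

Local Notation Z2 := (upperLie (wholeQ br2) n).
Let heta := isoclinism_eta hiso.
Let hxi := isoclinism_xi hiso.
Let Z2s := Zsub hL2 n.

Definition teta (a : qV A) : qV B :=
  epsilon (inhabits 0) (fun b => qS B b /\ Z2 (pB b - eta (pA a))).

Definition txi (a : qV A) : qV B :=
  epsilon (inhabits 0) (fun b => lowerLie B n.+1 b /\ pB b = xi (pA a)).

(* Both choices are possible by surjectivity of the projection pB. *)
Lemma teta_spec a : qS B (teta a) /\ Z2 (pB (teta a) - eta (pA a)).
Proof.
apply: (epsilon_spec (inhabits 0) (fun b => qS B b /\ Z2 (pB b - eta (pA a)))).
by have [b Sb <-] := ip_surj hB (eta (pA a)); exists b; rewrite subrr; split; last exact: Z0.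
Qed.

Lemma txi_spec a :
  lowerLie A n.+1 a -> lowerLie B n.+1 (txi a) /\ pB (txi a) = xi (pA a).
Proof.
move=> Ga.
apply: (epsilon_spec (inhabits 0) (fun b => lowerLie B n.+1 b /\ pB b = xi (pA a))).
by have [b Gb Eb] := ip_Gsurj hB (xi_in hxi (ip_G hA Ga)); exists b.
Qed.

Lemma teta_qiso : qiso (qbr A) (qbr B) (qS A) (upperLie A n) (qS B) (upperLie B n) teta.
Proof.
have [mA mB] := (ip_morph hA, ip_morph hB).
have Sb a := (teta_spec a).1; have Eb a := (teta_spec a).2.
have bE a := subB_sym Z2s (Eb a).
split; [by move=> a _; exact: Sb | split; [|split; [|split; [|split]]]].
- move=> x y Sx Sy /(ip_Zdiff wfA hA Sx Sy) Zxy; apply/(ip_Zdiff wfB hB (Sb x) (Sb y)).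
  exact: (subB_trans Z2s (Eb x) (subB_trans Z2s (eta_wd heta Zxy) (bE y))).
- move=> a x y Sx Sy; apply/(ip_Zdiff wfB hB (Sb _) (subL (wf_sub wfB) a (Sb x) (Sb y))).
  rewrite (morph_lin mB _ (Sb x) (Sb y)); apply: (subB_trans Z2s (Eb _)).
  rewrite (morph_lin mA _ Sx Sy); apply: (subB_trans Z2s (eta_lin heta _ _ _)).
  exact: (subL_cong Z2s a (bE x) (bE y)).
- move=> x y Sx Sy; apply/(ip_Zdiff wfB hB (Sb _) (wf_br wfB (Sb x) (Sb y))).
  rewrite (morph_br mB (Sb x) (Sb y)); apply: (subB_trans Z2s (Eb _)).
  rewrite (morph_br mA Sx Sy); apply: (subB_trans Z2s (eta_br heta _ _)).
  exact: (br_cong hL2 Z2s (Zideal hL2 (k := n)) (bE x) (bE y)).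
- move=> x y Sx Sy /(ip_Zdiff wfB hB (Sb x) (Sb y)) Zxy; apply/(ip_Zdiff wfA hA Sx Sy).
  exact: (eta_inj heta (subB_trans Z2s (bE x) (subB_trans Z2s Zxy (Eb y)))).
- move=> b Sb'; have [c Zc] := eta_surj heta (pB b).
  have [a Sa Ea] := ip_surj hA c; exists a => //.
  apply/(ip_Zdiff wfB hB (Sb a) Sb').
  by apply: (subB_trans Z2s (Eb a)); rewrite Ea.
Qed.

Lemma txi_qiso :
  qiso (qbr A) (qbr B) (lowerLie A n.+1) (qI A) (lowerLie B n.+1) (qI B) txi.
Proof.
have [mA mB] := (ip_morph hA, ip_morph hB).
have [GAs GBs] := (lower_sub wfA n, lower_sub wfB n).
have SA x (Gx : lowerLie A n.+1 x) := lower_S wfA Gx.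
have SB x (Gx : lowerLie A n.+1 x) := lower_S wfB (txi_spec Gx).1.
have Gt x (Gx : lowerLie A n.+1 x) := (txi_spec Gx).1.
have Et x (Gx : lowerLie A n.+1 x) := (txi_spec Gx).2.
have G1 x (Gx : lowerLie A n.+1 x) := ip_G hA Gx.
split; [exact: Gt | split; [|split; [|split; [|split]]]].
- move=> x y Gx Gy /(ip_Idiff wfA hA Gx Gy) Exy.
  by apply/(ip_Idiff wfB hB (Gt _ Gx) (Gt _ Gy)); rewrite !Et ?Exy.
- move=> a x y Gx Gy; have Gl := subL GAs a Gx Gy.
  apply/(ip_Idiff wfB hB (Gt _ Gl) (subL GBs a (Gt _ Gx) (Gt _ Gy))).
  rewrite (morph_lin mB _ (SB _ Gx) (SB _ Gy)) !Et // (morph_lin mA _ (SA _ Gx) (SA _ Gy)).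
  exact: (xi_lin hxi a (G1 _ Gx) (G1 _ Gy)).
- move=> x y Gx Gy; have Gb := lower_br wfA Gx Gy.
  apply/(ip_Idiff wfB hB (Gt _ Gb) (lower_br wfB (Gt _ Gx) (Gt _ Gy))).
  rewrite (morph_br mB (SB _ Gx) (SB _ Gy)) !Et // (morph_br mA (SA _ Gx) (SA _ Gy)).
  exact: (xi_br hxi (G1 _ Gx) (G1 _ Gy)).
- move=> x y Gx Gy /(ip_Idiff wfB hB (Gt _ Gx) (Gt _ Gy)); rewrite !Et // => Exy.
  by apply/(ip_Idiff wfA hA Gx Gy); exact: (xi_inj hxi (G1 _ Gx) (G1 _ Gy) Exy).
- move=> b Gb; have [c Gc Ec] := xi_surj hxi (ip_G hB Gb).
  have [a Ga Ea] := ip_Gsurj hA Gc; exists a => //.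
  by apply/(ip_Idiff wfB hB (Gt _ Ga) Gb); rewrite Et // Ea Ec.
Qed.

Lemma teta_txi_compat (x : nat -> qV A) (y : nat -> qV B) :
  (forall i, (i <= n)%N -> qS A (x i)) -> (forall i, (i <= n)%N -> qS B (y i)) ->
  (forall i, (i <= n)%N -> upperLie B n (teta (x i) - y i)) ->
  qI B (txi (iterLie (qbr A) x n) - iterLie (qbr B) y n).
Proof.
move=> Sx Sy Hxy.
have Gx : lowerLie A n.+1 (iterLie (qbr A) x n) := lower_iter Sx.
have Gy : lowerLie B n.+1 (iterLie (qbr B) y n) := lower_iter Sy.
apply/(ip_Idiff wfB hB (txi_spec Gx).1 Gy).
rewrite (txi_spec Gx).2 (morph_iter wfA (ip_morph hA) Sx) (morph_iter wfB (ip_morph hB) Sy).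
apply: (isoclinism_compat hiso) => i Hi.
have /(ip_Zdiff wfB hB (teta_spec _).1 (Sy i Hi)) Zi := Hxy i Hi.
exact: (subB_trans Z2s (subB_sym Z2s (teta_spec _).2) Zi).
Qed.

Lemma isoclinic_transport : isoclinic n A B.
Proof.
by exists teta, txi; split; [exact: teta_qiso | exact: txi_qiso | exact: teta_txi_compat].
Qed.
End Transport.

Section Kalgebra.
Variables (K : fieldType) (V1 V2 : lmodType K).
Variables (br1 : V1 -> V1 -> V1) (br2 : V2 -> V2 -> V2) (n : nat) (eta : V1 -> V2).
Hypotheses (hL1 : leibniz br1) (hL2 : leibniz br2).
Local Notation Z1 := (upperLie (wholeQ br1) n).
Local Notation Z2 := (upperLie (wholeQ br2) n).
Hypothesis heta : qiso br1 br2 (fun _ => True) Z1 (fun _ => True) Z2 eta.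
Local Notation Kp := (Kpred br2 n eta).
Let Z2s := Zsub hL2 n.

Lemma eta_Z g : Z1 g <-> Z2 (eta g).
Proof.
have eta0 : Z2 (eta 0).
  have := subN Z2s (eta_lin heta 1 0 0).
  by rewrite !scale1r addr0 opprB addrK.
split=> [Zg | Zeg].
- have := subD Z2s (eta_wd heta (x := g) (y := 0) _) eta0.
  by rewrite subr0 subrK; apply.
- by have := eta_inj heta (subB Z2s Zeg eta0); rewrite subr0.
Qed.

Lemma K_Z p : Kp p -> (Z1 p.1 <-> Z2 p.2).
Proof.
move=> Kpp; rewrite eta_Z; split=> H.
- by have := subB Z2s H Kpp; rewrite opprB addrC subrK.
- by have := subD Z2s Kpp H; rewrite subrK.
Qed.

Lemma K_diag g : Kp (g, eta g).
Proof. by rewrite /Kpred /= subrr; exact: Z0. Qed.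

Lemma K_sub : subspaceP Kp.
Proof.
split; first by rewrite /Kpred subr0 -eta_Z; exact: Z0.
move=> a x y Hx Hy; rewrite /Kpred.
have -> : eta (a *: x.1 + y.1) - (a *: x.2 + y.2) =
    (eta (a *: x.1 + y.1) - (a *: eta x.1 + eta y.1)) +
    ((a *: eta x.1 + eta y.1) - (a *: x.2 + y.2)) by rewrite subrKA.
exact: (subD Z2s (eta_lin heta _ _ _) (subL_cong Z2s a Hx Hy)).
Qed.

Lemma K_br p q : Kp p -> Kp q -> Kp (prod_br br1 br2 p q).
Proof.
move=> Hp Hq; rewrite /Kpred /=.
apply: (subB_trans Z2s (eta_br heta _ _)).
exact: (br_cong hL2 Z2s (Zideal hL2 (k := n)) Hp Hq).
Qed.

Lemma K_br00 : prod_br br1 br2 0 0 = 0.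
Proof. by rewrite /prod_br /= (br0l hL1) (br0l hL2). Qed.

Lemma wf_K (I : (V1 * V2)%type -> Prop) :
  (forall p, I p -> Kp p) -> wf_pres (KmodQ br1 br2 n eta I).
Proof. by split; [exact: K_sub | exact: K_br |]. Qed.

Lemma Zg1_K p : Zg1 V2 br1 n p -> Kp p.
Proof. by case: p => g h [Zg /= ->]; rewrite /Kpred /= subr0 -eta_Z. Qed.

Lemma Zg2_K p : Zg2 V1 br2 n p -> Kp p.
Proof.
case: p => g h [/= -> Zh]; rewrite /Kpred /=.
by apply: (subB Z2s _ Zh); rewrite -eta_Z; exact: Z0.
Qed.

Lemma iso_fst : pres_iso (KmodQ br1 br2 n eta (Zg2 V1 br2 n)) br1 fst.
Proof.
split; [by split | |].
- by move=> g; exists (g, eta g) => //; exact: K_diag.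
- move=> p Kpp; split=> [[] // | p10]; split=> //.
  by apply/(K_Z Kpp); rewrite p10; exact: Z0.
Qed.

Lemma iso_snd : pres_iso (KmodQ br1 br2 n eta (Zg1 V2 br1 n)) br2 snd.
Proof.
split; [by split | |].
- by move=> h; have [g Hg] := eta_surj heta h; exists (g, h).
- move=> p Kpp; split=> [[] // | p20]; split=> //.
  by apply/(K_Z Kpp); rewrite p20; exact: Z0.
Qed.
End Kalgebra.

Theorem mainTheorem8 (K : fieldType) (V1 V2 : lmodType K)
  (br1 : V1 -> V1 -> V1) (br2 : V2 -> V2 -> V2) (n : nat) (eta xi : V1 -> V2) :
  (2%:R : K) != 0 ->
  leibniz br1 -> leibniz br2 ->
  (1 <= n)%N ->
  is_isoclinism n (wholeQ br1) (wholeQ br2) eta xi ->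
  (forall x, lieIdeal (wholeQ br1) (upperLie (wholeQ br1) n.-1) (qS (wholeQ br1)) x ->
             lowerLie (wholeQ br1) n.+1 x) ->
  (forall x, lieIdeal (wholeQ br2) (upperLie (wholeQ br2) n.-1) (qS (wholeQ br2)) x ->
             lowerLie (wholeQ br2) n.+1 x) ->
  isoclinic n (KmodQ br1 br2 n eta (Zg2 V1 br2 n))
              (KsumQ br1 br2 n eta (Zg1 V2 br1 n)) /\
  isoclinic n (KmodQ br1 br2 n eta (Zg1 V2 br1 n))
              (KsumQ br1 br2 n eta (Zg2 V1 br2 n)).
Proof.
move=> _ hL1 hL2 _ hiso _ _.
have heta := isoclinism_eta hiso.
have wfZ1 := wf_K hL1 hL2 heta (Zg1_K hL2 heta).
have wfZ2 := wf_K hL1 hL2 heta (Zg2_K hL1 hL2 heta).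
have pZ1 := isoclinic_proj_of_iso wfZ1 (iso_snd hL2 heta) n.
have pZ2 := isoclinic_proj_of_iso wfZ2 (iso_fst hL1 hL2 heta) n.
have wf0 : wf_pres (KmodQ br1 br2 n eta (fun p => p = 0)).
  by apply: (wf_K hL1 hL2 heta) => p ->; exact: (sub0 (K_sub hL1 hL2 heta)).
pose N := lower_quot n (KmodQ br1 br2 n eta (fun p => p = 0)).
have wfN : wf_pres N := wf_lower_quot n wf0.
have N0 : qI N 0 := sub0 (lower_sub wf0 n).
have hN : lie_nilpotent n N := lower_quot_nilpotent n wf0.
have br00 : qbr N 0 0 = 0 := K_br00 hL1 hL2.
split.
- exact: (isoclinic_transport hL2 hiso wfZ2 (wf_prod wfZ1 wfN) pZ2
    (isoclinic_proj_prod wfZ1 wfN N0 br00 pZ1 hN)).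
- have [eta' [xi' hiso']] := isoclinism_sym hiso hL1 hL2.
  exact: (isoclinic_transport hL1 hiso' wfZ1 (wf_prod wfZ2 wfN) pZ1
    (isoclinic_proj_prod wfZ2 wfN N0 br00 pZ2 hN)).
Qed.
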